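(* Let $G$ be an infinite group such that $[e]_g$ is a subgroup of $G$ for every $g\in G$. Then $G$ has infinitely many conjugacy classes.
   Context: $[x,y]=x^{-1}y^{-1}xy$; $[e]_g=\{[x,g]\mid x\in G\}$. *)

From Stdlib Require Import List.

Record Group : Type := {
  carrier :> Type;
  gmul : carrier -> carrier -> carrier;
  ginv : carrier -> carrier;
  gone : carrier;
  gmul_assoc : forall x y z, gmul x (gmul y z) = gmul (gmul x y) z;
  gmul_1l : forall x, gmul gone x = x;
  gmul_1r : forall x, gmul x gone = x;
  gmul_Vl : forall x, gmul (ginv x) x = gone;
  gmul_Vr : forall x, gmul x (ginv x) = gone
}.

Arguments gmul {G} : rename.
Arguments ginv {G} : rename.
Arguments gone {G} : rename.

Definition comm {G : Group} (x y : G) : G :=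
  gmul (gmul (gmul (ginv x) (ginv y)) x) y.

Definition comm_set {G : Group} (g : G) : G -> Prop :=
  fun z => exists x : G, z = comm x g.

Definition is_subgroup {G : Group} (H : G -> Prop) : Prop :=
  H gone /\ (forall x y, H x -> H y -> H (gmul x y)) /\ (forall x, H x -> H (ginv x)).

Definition group_finite (G : Group) : Prop :=
  exists l : list G, forall x : G, In x l.

Definition conjugate {G : Group} (x y : G) : Prop :=
  exists z : G, y = gmul (gmul (ginv z) x) z.

Definition finitely_many_classes (G : Group) : Prop :=
  exists l : list G, forall x : G, exists y, In y l /\ conjugate x y.

(** For [a : G] the set [[e]_{a^-1} = { x^-1 a x a^-1 }] is the conjugacy class
    of [a] translated by [a^-1]; under the hypothesis it is a subgroup, which
    depends only on the class of [a], is normal, and contains [[e]_{b^-1}] for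
    each of its elements [b].  If there were finitely many classes, some class
    would be infinite since [G] is; then [[e]_{g^-1}] is infinite, so it meets
    an infinite class [h], and [[e]_{h^-1}] is strictly smaller (equality would
    force [h = 1]).  Since these subgroups are indexed by the finitely many
    classes, such a strict descent cannot go on forever. *)

From Stdlib Require Import List Classical ClassicalEpsilon Lia Wf_nat.

Definition finite_set {A : Type} (P : A -> Prop) : Prop :=
  exists L : list A, forall x, P x -> In x L.

Lemma finite_union_over_list {I A : Type} (l : list I) (F : I -> A -> Prop) :
  exists L : list A, forall i x, In i l -> finite_set (F i) -> F i x -> In x L.
Proof.
  induction l as [|i0 l [L' HL']].
  - exists nil. intros i x [].
  - destruct (classic (finite_set (F i0))) as [[L0 HL0]|Hinf].
    + exists (L0 ++ L'). intros i x [<-|Hi] Hfin Hx; apply in_or_app; eauto.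
    + exists L'. intros i x [<-|Hi] Hfin Hx; [contradiction|eauto].
Qed.

Definition count_in {A : Type} (l : list A) (P : A -> Prop) : nat :=
  length (filter (fun r => if excluded_middle_informative (P r) then true else false) l).

Lemma count_in_le {A : Type} (l : list A) (P Q : A -> Prop) :
  (forall r, P r -> Q r) -> count_in l P <= count_in l Q.
Proof.
  intros PQ. unfold count_in. induction l as [|r l IH]; simpl; [lia|].
  destruct (excluded_middle_informative (P r)), (excluded_middle_informative (Q r));
    simpl; try lia. exfalso; auto.
Qed.

Lemma count_in_lt {A : Type} (l : list A) (P Q : A -> Prop) :
  (forall r, P r -> Q r) -> (exists r, In r l /\ Q r /\ ~ P r) ->
  count_in l P < count_in l Q.
Proof.
  intros PQ. induction l as [|r l IH]; intros [r' [Hr' [Qr' nPr']]]; [destruct Hr'|].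
  pose proof (count_in_le l P Q PQ) as Hle. unfold count_in in *; simpl.
  destruct Hr' as [->|Hr'].
  - destruct (excluded_middle_informative (P r')); [contradiction|].
    destruct (excluded_middle_informative (Q r')); [simpl; lia|contradiction].
  - specialize (IH (ex_intro _ r' (conj Hr' (conj Qr' nPr')))).
    destruct (excluded_middle_informative (P r)), (excluded_middle_informative (Q r));
      simpl; try lia. exfalso; auto.
Qed.

Section CommutatorClasses.

Variable G : Group.
Implicit Types a b g h u x y z : G.

Lemma mulKg x y : gmul (ginv x) (gmul x y) = y.
Proof. rewrite gmul_assoc, gmul_Vl, gmul_1l. reflexivity. Qed.

Lemma mulKVg x y : gmul x (gmul (ginv x) y) = y.
Proof. rewrite gmul_assoc, gmul_Vr, gmul_1l. reflexivity. Qed.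

Lemma inv_unique x y : gmul x y = gone -> y = ginv x.
Proof. intros Hxy. rewrite <- (mulKg x y), Hxy, gmul_1r. reflexivity. Qed.

Lemma invgK x : ginv (ginv x) = x.
Proof. symmetry. apply inv_unique, gmul_Vl. Qed.

Lemma invMg x y : ginv (gmul x y) = gmul (ginv y) (ginv x).
Proof. symmetry. apply inv_unique. rewrite <- gmul_assoc, mulKVg, gmul_Vr. reflexivity. Qed.

Lemma invg1 : ginv (@gone G) = gone.
Proof. symmetry. apply inv_unique, gmul_1l. Qed.

Ltac group_simpl := repeat progress (rewrite ?invMg, ?invgK, ?invg1, <-?gmul_assoc,
  ?gmul_Vl, ?gmul_Vr, ?gmul_1l, ?gmul_1r, ?mulKg, ?mulKVg).

Lemma conjugate_refl a : conjugate a a.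
Proof. exists gone. group_simpl. reflexivity. Qed.

Lemma conjugate_sym a b : conjugate a b -> conjugate b a.
Proof. intros [z ->]. exists (ginv z). group_simpl. reflexivity. Qed.

Lemma conjugate_trans a b c : conjugate a b -> conjugate b c -> conjugate a c.
Proof. intros [z ->] [w ->]. exists (gmul z w). group_simpl. reflexivity. Qed.

Lemma conjugate_one h : conjugate h gone -> h = gone.
Proof.
  intros [z Hz].
  transitivity (gmul (gmul z (gmul (gmul (ginv z) h) z)) (ginv z)).
  - group_simpl. reflexivity.
  - rewrite <- Hz. group_simpl. reflexivity.
Qed.

(* [comm x (ginv a) = x^-1 a x a^-1], so the class of [a] is [comm_class a] times [a]. *)
Definition comm_class a : G -> Prop := comm_set (ginv a).

Lemma conjugate_iff_comm_class a y : conjugate a y <-> comm_class a (gmul y (ginv a)).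
Proof.
  split.
  - intros [z ->]. exists z. unfold comm. group_simpl. reflexivity.
  - intros [x Hx]. exists x. unfold comm in Hx.
    transitivity (gmul (gmul y (ginv a)) a); [group_simpl; reflexivity|].
    rewrite Hx. group_simpl. reflexivity.
Qed.

Definition finite_class a : Prop := finite_set (conjugate a).

Lemma finite_class_conjugate a b : conjugate a b -> finite_class a -> finite_class b.
Proof.
  intros Hab [L HL]. exists L. intros y Hby. apply HL, (conjugate_trans _ b); assumption.
Qed.

Lemma finite_class1 : finite_class gone.
Proof. exists (gone :: nil). intros y [z ->]. left. group_simpl. reflexivity. Qed.

Lemma finite_class_of_comm_class a : finite_set (comm_class a) -> finite_class a.
Proof.
  intros [L HL]. exists (map (fun u => gmul u a) L). intros y Hy.
  replace y with (gmul (gmul y (ginv a)) a) by (group_simpl; reflexivity).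
  apply (in_map (fun u => gmul u a)), HL, conjugate_iff_comm_class, Hy.
Qed.

Section CommSetSubgroups.

Hypothesis comm_set_subgroup : forall g : G, is_subgroup (comm_set g).

Lemma comm_class_conjugate a b : conjugate a b -> forall u, comm_class b u <-> comm_class a u.
Proof.
  (* [u = (u b a^-1) (b a^-1)^-1], where [u b] and [b] are both conjugate to [a]. *)
  enough (Hsub : forall a b, conjugate a b -> forall u, comm_class b u -> comm_class a u).
  { intros Hab u; split; apply Hsub; [assumption|apply conjugate_sym, Hab]. }
  clear a b. intros a b Hab u Hu.
  destruct (comm_set_subgroup (ginv a)) as [_ [Hmul Hinv]].
  assert (Hub : comm_class a (gmul (gmul u b) (ginv a))).
  { apply conjugate_iff_comm_class, (conjugate_trans _ b); [assumption|].
    apply conjugate_iff_comm_class. group_simpl. exact Hu. }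
  assert (Hb : comm_class a (gmul b (ginv a))) by (apply conjugate_iff_comm_class; assumption).
  replace u with (gmul (gmul (gmul u b) (ginv a)) (ginv (gmul b (ginv a))))
    by (group_simpl; reflexivity).
  apply Hmul; [exact Hub|apply Hinv, Hb].
Qed.

Lemma comm_class_normal a u z : comm_class a u -> comm_class a (gmul (gmul (ginv z) u) z).
Proof.
  intros Hu. set (c := gmul (gmul (ginv z) a) z).
  assert (Hac : conjugate a c) by (exists z; reflexivity).
  apply (comm_class_conjugate a c Hac).
  assert (Hc : conjugate c (gmul (gmul (ginv z) (gmul u a)) z)).
  { apply (conjugate_trans _ a); [apply conjugate_sym, Hac|].
    apply (conjugate_trans _ (gmul u a)); [|exists z; reflexivity].
    apply conjugate_iff_comm_class. group_simpl. exact Hu. }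
  apply conjugate_iff_comm_class in Hc.
  replace (gmul (gmul (ginv z) u) z)
    with (gmul (gmul (gmul (ginv z) (gmul u a)) z) (ginv c)) by (unfold c; group_simpl; reflexivity).
  exact Hc.
Qed.

Lemma comm_class_sub a b : comm_class a b -> forall u, comm_class b u -> comm_class a u.
Proof.
  intros Hb u [x ->]. destruct (comm_set_subgroup (ginv a)) as [_ [Hmul Hinv]].
  unfold comm. rewrite invgK.
  apply Hmul; [apply comm_class_normal|apply Hinv]; exact Hb.
Qed.

Lemma eq1_of_comm_class_sub g h :
  comm_class g h -> (forall u, comm_class g u -> comm_class h u) -> h = gone.
Proof.
  intros Hgh Hsub. destruct (comm_set_subgroup (ginv g)) as [_ [_ Hinv]].
  apply conjugate_one, conjugate_iff_comm_class.
  rewrite gmul_1l. apply Hsub, Hinv, Hgh.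
Qed.

Section ClassRepresentatives.

Variable reps : list G.
Hypothesis reps_meet_classes : forall x : G, exists y, In y reps /\ conjugate x y.

Lemma finite_of_finite_classes (P : G -> Prop) :
  (forall x, P x -> finite_class x) -> finite_set P.
Proof.
  intros HP. destruct (finite_union_over_list reps conjugate) as [L HL].
  exists L. intros x Px. destruct (reps_meet_classes x) as [r [Hr Hxr]].
  apply (HL r x Hr); [|apply conjugate_sym, Hxr].
  apply (finite_class_conjugate x); auto.
Qed.

Definition reps_below g : nat :=
  count_in reps (fun r => forall u, comm_class r u -> comm_class g u).

Lemma reps_below_descent g :
  ~ finite_class g -> exists h, ~ finite_class h /\ reps_below h < reps_below g.
Proof.
  intros Hg.
  assert (Hh : exists h, comm_class g h /\ ~ finite_class h).
  { apply NNPP. intros Hn.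
    apply Hg, finite_class_of_comm_class, finite_of_finite_classes.
    intros x Hx. apply NNPP. intros Hfx. apply Hn. exists x; auto. }
  destruct Hh as [h [Hgh Hh]]. exists h. split; [exact Hh|].
  destruct (reps_meet_classes g) as [r [Hr Hgr]].
  apply count_in_lt.
  - intros r' Hr' u Hu. apply (comm_class_sub g h Hgh), Hr', Hu.
  - exists r. split; [exact Hr|]. split.
    + intros u. apply (comm_class_conjugate g r Hgr).
    + intros Hrh. apply Hh. rewrite (eq1_of_comm_class_sub g h Hgh); [apply finite_class1|].
      intros u Hu. apply Hrh, (comm_class_conjugate g r Hgr), Hu.
Qed.

Lemma all_classes_finite g : finite_class g.
Proof.
  induction g as [g IH] using (well_founded_ind (well_founded_ltof G reps_below)).
  apply NNPP. intros Hg.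
  destruct (reps_below_descent g Hg) as [h [Hh Hlt]].
  exact (Hh (IH h Hlt)).
Qed.

End ClassRepresentatives.
End CommSetSubgroups.
End CommutatorClasses.

Theorem mainTheorem7 (G : Group) :
  ~ group_finite G ->
  (forall g : G, is_subgroup (comm_set g)) ->
  ~ finitely_many_classes G.
Proof.
  intros Hinf Hsub [reps Hreps]. apply Hinf.
  destruct (finite_of_finite_classes G reps Hreps (fun _ => True)) as [L HL].
  - intros x _. exact (all_classes_finite G Hsub reps Hreps x).
  - exists L. intros x. apply HL. trivial.
Qed.
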